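(* If $\xi\in\mathfrak I(\mathrm{SU}(n))\subseteq\mathfrak I(\mathrm U(n))$, then $U_\xi(\mathrm{SU}(n))=U_\xi(\mathrm U(n))$.
   Context: For a compact matrix group $G\subseteq\mathrm U(n)$ with maximal torus Lie algebra $\mathfrak t$ (for $\mathrm U(n)$: diagonal skew-Hermitian matrices; for $\mathrm{SU}(n)$: traceless ones), $\mathfrak I(G)=(2\pi)^{-1}\exp^{-1}(e)\cap\mathfrak t$ and $\gamma_\xi(\lambda)=\exp(-\sqrt{-1}\ln(\lambda)\xi)$. $\Omega_{\mathrm{alg}}G$: loops $\gamma:S^1\to G$, $\gamma(1)=e$, with $\gamma,\gamma^{-1}$ having finite Fourier series; $\Lambda^+_{\mathrm{alg}}G^{\mathbb C}$: loops in $G^{\mathbb C}$ ($\mathrm{GL}(n,\mathbb C)$ resp. $\mathrm{SL}(n,\mathbb C)$) that are polynomials in $\lambda$ with polynomial inverse. $H^n_+$ is the closed span of $\lambda^ie_j$, $i\ge0$, in $L^2(S^1,\mathbb C^n)$. $U_\xi(G)=\{\gamma\in\Omega_{\mathrm{alg}}G:\gamma H^n_+=\Psi\gamma_\xi H^n_+\text{ for some }\Psi\in\Lambda^+_{\mathrm{alg}}G^{\mathbb C}\}$, regarded as a set of subspaces $\gamma H^n_+$ (equivalently loops). *)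

From HB Require Import structures.
From mathcomp Require Import all_boot all_order all_algebra.
Set Implicit Arguments. Unset Strict Implicit. Unset Printing Implicit Defensive.
Import Order.TTheory GRing.Theory Num.Theory.
Local Open Scope ring_scope.

(* C : a numeric closed field (e.g. the complex numbers); it carries the
   complex conjugation z^* and the imaginary unit 'i. *)

Definition on_circle (C : numClosedFieldType) (z : C) : bool := `|z| == 1.

Definition evalmx (C : numClosedFieldType) (m p : nat) (P : 'M[{poly C}]_(m, p))
  (z : C) : 'M[C]_(m, p) := \matrix_(i, j) (P i j).[z].

(* loops: maps S^1 -> M_n(C); only values on the unit circle are ever used *)
Definition loop (C : numClosedFieldType) (n : nat) := C -> 'M[C]_n.

Definition ctrans (C : numClosedFieldType) (n : nat) (A : 'M[C]_n) : 'M[C]_n :=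
  (map_mx Num.conj A)^T.

(* finite Fourier series: gamma(z) = z^-N P(z) on S^1 with P polynomial *)
Definition is_laurent (C : numClosedFieldType) (n : nat) (g : loop C n) : Prop :=
  exists (N : nat) (P : 'M[{poly C}]_n),
    forall z, on_circle z -> g z = z ^- N *: evalmx P z.

Definition is_poly_loop (C : numClosedFieldType) (n : nat) (g : loop C n) : Prop :=
  exists P : 'M[{poly C}]_n, forall z, on_circle z -> g z = evalmx P z.

Definition loop_inverse (C : numClosedFieldType) (n : nat) (g h : loop C n) : Prop :=
  forall z, on_circle z -> g z *m h z = 1%:M /\ h z *m g z = 1%:M.

Definition in_U (C : numClosedFieldType) (n : nat) (g : loop C n) : Prop :=
  forall z, on_circle z -> ctrans (g z) *m g z = 1%:M.

Definition in_SU (C : numClosedFieldType) (n : nat) (g : loop C n) : Prop :=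
  in_U g /\ forall z, on_circle z -> \det (g z) = 1.

Definition in_GL (C : numClosedFieldType) (n : nat) (g : loop C n) : Prop :=
  forall z, on_circle z -> g z \in unitmx.

Definition in_SL (C : numClosedFieldType) (n : nat) (g : loop C n) : Prop :=
  forall z, on_circle z -> \det (g z) = 1.

Definition Omega_alg (C : numClosedFieldType) (n : nat) (G : loop C n -> Prop)
  (g : loop C n) : Prop :=
  [/\ G g, g 1 = 1%:M, is_laurent g &
      exists h, loop_inverse g h /\ is_laurent h].

Definition Lambda_plus (C : numClosedFieldType) (n : nat) (GC : loop C n -> Prop)
  (Psi : loop C n) : Prop :=
  [/\ GC Psi, is_poly_loop Psi &
      exists Q, loop_inverse Psi Q /\ is_poly_loop Q].

(* the subspace gamma H^n_+, represented by its algebraic part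
   { gamma f | f a polynomial C^n-valued loop } (functions on S^1) *)
Definition in_subspace (C : numClosedFieldType) (n : nat) (g : loop C n)
  (v : C -> 'cV[C]_n) : Prop :=
  exists f : 'cV[{poly C}]_n, forall z, on_circle z -> v z = g z *m evalmx f z.

Definition same_subspace (C : numClosedFieldType) (n : nat) (g1 g2 : loop C n) : Prop :=
  forall v : C -> 'cV[C]_n, in_subspace g1 v <-> in_subspace g2 v.

(* an element xi of I(U(n)) is diag(i k_1, ..., i k_n) with k_j integers *)
Definition xi_of (C : numClosedFieldType) (n : nat) (k : 'I_n -> int) : 'M[C]_n :=
  diag_mx (\row_j (Num.imaginary * (k j)%:~R)).

(* gamma_xi(lambda) = exp(-i ln(lambda) xi) = diag(lambda^{k_1},...,lambda^{k_n}) *)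
Definition gamma_xi (C : numClosedFieldType) (n : nat) (k : 'I_n -> int) : loop C n :=
  fun z => diag_mx (\row_j (z ^ (k j))).

Definition U_xi (C : numClosedFieldType) (n : nat) (G GC : loop C n -> Prop)
  (k : 'I_n -> int) (g : loop C n) : Prop :=
  Omega_alg G g /\
  exists Psi, Lambda_plus GC Psi /\
    same_subspace g (fun z => Psi z *m gamma_xi k z).

From HB Require Import structures.
From mathcomp Require Import all_boot all_order all_algebra ring.
Set Implicit Arguments.
Unset Strict Implicit.
Unset Printing Implicit Defensive.
Import GRing.Theory Num.Theory.
Local Open Scope ring_scope.

(* Only determinants are at stake.  A polynomial matrix loop with polynomial
   inverse has a polynomial unit, i.e. a nonzero constant, as determinant,
   because an identity between polynomials holding on the (infinite) unit
   circle holds identically.  If [g H^n_+ = Psi gamma_xi H^n_+] then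
   [g = Psi gamma_xi F] and [Psi gamma_xi = g H] with [H F = 1], and
   [det gamma_xi = 1] since [tr xi = 0]; so [det g] is constant on the circle,
   hence equal to [det g(1) = 1].  Finally [Psi] is replaced by [a Psi] with
   [a^n det Psi = 1], which has the same span and lies in [SL(n, C)]. *)

Section UnitCircle.
Variable C : numClosedFieldType.

Lemma on_circle1 : on_circle (1 : C).
Proof. by rewrite /on_circle normr1. Qed.

Lemma on_circle_neq0 (z : C) : on_circle z -> z != 0.
Proof.
by rewrite /on_circle; apply: contraTneq => ->; rewrite normr0 eq_sym oner_eq0.
Qed.

Definition cayley (a : nat) : C := (a%:R + 'i) / (a%:R - 'i).

Lemma cayley_den_neq0 (a : nat) : (a%:R - 'i : C) != 0.
Proof.
rewrite subr_eq0; apply/eqP => h.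
by move: (@nonRealCi C); rewrite -h realn.
Qed.

Lemma cayley_on_circle a : on_circle (cayley a).
Proof.
have conj_den : (a%:R - 'i : C) = (a%:R + 'i)^*.
  by rewrite rmorphD /= rmorph_nat conjCi.
rewrite /on_circle /cayley normf_div conj_den norm_conjC divff //.
by rewrite normr_eq0 -conjC_eq0 -conj_den cayley_den_neq0.
Qed.

Lemma cayley_inj : injective cayley.
Proof.
move=> a b /eqP; rewrite /cayley eqr_div ?cayley_den_neq0 // => /eqP h.
have : (2 * 'i * (b%:R - a%:R) : C) = 0.
  by rewrite -(subrr ((a%:R + 'i) * (b%:R - 'i))) {2}h; ring.
move/eqP; rewrite !mulf_eq0 pnatr_eq0 (negbTE (@neq0Ci C)) /= subr_eq0 eqr_nat.
by move/eqP.
Qed.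

Lemma poly_eq0_on_circle (p : {poly C}) :
  (forall z, on_circle z -> p.[z] = 0) -> p = 0.
Proof.
move=> hp; apply: (@roots_geq_poly_eq0 _ p (map cayley (iota 0 (size p)))).
- by apply/allP => x /mapP [a _ ->]; apply/eqP/hp/cayley_on_circle.
- by rewrite map_inj_uniq ?iota_uniq //; apply: cayley_inj.
- by rewrite size_map size_iota.
Qed.

End UnitCircle.

Section Loops.
Variables (C : numClosedFieldType) (n : nat).
Implicit Types (g h Psi Gam : loop C n) (a : C).

Lemma evalmxZ m p (c : {poly C}) (P : 'M[{poly C}]_(m, p)) z :
  evalmx (c *: P) z = c.[z] *: evalmx P z.
Proof. by apply/matrixP => i j; rewrite !mxE hornerM. Qed.

Lemma evalmx_const m p (M : 'M[C]_(m, p)) z : evalmx (map_mx polyC M) z = M.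
Proof. by apply/matrixP => i j; rewrite !mxE hornerC. Qed.

Lemma det_evalmx (P : 'M[{poly C}]_n) z : \det (evalmx P z) = (\det P).[z].
Proof.
have -> : evalmx P z = map_mx (horner_eval z) P by apply/matrixP => i j; rewrite !mxE.
exact: det_map_mx.
Qed.

Lemma det_evalmx_const (P Q : 'M[{poly C}]_n) :
  (forall z, on_circle z -> evalmx P z *m evalmx Q z = 1%:M) ->
  exists2 c : C, c != 0 & forall z, on_circle z -> \det (evalmx P z) = c.
Proof.
move=> hPQ.
have detPQ : \det P * \det Q = 1.
  apply/eqP; rewrite -subr_eq0; apply/eqP/poly_eq0_on_circle => z hz.
  by rewrite hornerD hornerN hornerM hornerC -!det_evalmx -det_mulmx hPQ // det1 subrr.
have : \det P \is a GRing.unit by apply/unitrP; exists (\det Q); rewrite mulrC detPQ.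
rewrite poly_unitE => /andP [/size_poly1P [c c0 detP] _].
by exists c => // z _; rewrite det_evalmx detP hornerC.
Qed.

Lemma Lambda_plus_det_const (GC : loop C n -> Prop) Psi :
  Lambda_plus GC Psi ->
  exists2 c : C, c != 0 & forall z, on_circle z -> \det (Psi z) = c.
Proof.
case=> _ [P hP] [Q [hPQ [Q' hQ']]].
have [c c0 hc] : exists2 c : C, c != 0 &
    forall z, on_circle z -> \det (evalmx P z) = c.
  by apply: (@det_evalmx_const P Q') => z hz; rewrite -hP // -hQ' //; case: (hPQ z hz).
by exists c => // z hz; rewrite hP // hc.
Qed.

Lemma subspace_incl_factor g1 g2 :
  (forall v, in_subspace g1 v -> in_subspace g2 v) ->
  exists F : 'M[{poly C}]_n, forall z, on_circle z -> g1 z = g2 z *m evalmx F z.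
Proof.
move=> incl.
have : forall j : 'I_n, exists f : 'cV[{poly C}]_n,
    forall z, on_circle z -> g1 z *m delta_mx j 0 = g2 z *m evalmx f z.
  move=> j; apply: incl; exists (map_mx polyC (delta_mx j 0)) => z _.
  by rewrite evalmx_const.
case/fin_all_exists => f hf.
exists (\matrix_(i, j) f j i 0) => z hz; apply/matrixP => i j.
have := congr1 (fun M : 'cV[C]_n => M i 0) (hf j z hz).
rewrite -colE /= !mxE => ->.
by apply: eq_bigr => l _; rewrite !mxE.
Qed.

Lemma is_poly_loop_scale a h : is_poly_loop h -> is_poly_loop (fun z => a *: h z).
Proof.
by case=> P hP; exists (a%:P *: P) => z hz; rewrite evalmxZ hornerC hP.
Qed.

Lemma loop_inverse_scale a h h' : a != 0 -> loop_inverse h h' ->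
  loop_inverse (fun z => a *: h z) (fun z => a^-1 *: h' z).
Proof.
move=> a0 hh' z hz; have [e1 e2] := hh' z hz.
by rewrite -!scalemxAl -!scalemxAr !scalerA mulVf // mulfV // e1 e2 !scale1r.
Qed.

Lemma same_subspace_scale a Psi Gam : a != 0 ->
  same_subspace (fun z => (a *: Psi z) *m Gam z) (fun z => Psi z *m Gam z).
Proof.
move=> a0 v; split=> -[f hf].
- exists (a%:P *: f) => z hz.
  by rewrite hf // evalmxZ hornerC -!scalemxAl -scalemxAr.
- exists (a^-1%:P *: f) => z hz.
  by rewrite hf // evalmxZ hornerC -scalemxAr -!scalemxAl scalerA mulVf // scale1r.
Qed.

Lemma Lambda_plus_GL_scale_SL Psi : Lambda_plus (@in_GL C n) Psi ->
  exists2 a : C, a != 0 & Lambda_plus (@in_SL C n) (fun z => a *: Psi z).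
Proof.
move=> hPsi; have [c c0 hc] := Lambda_plus_det_const hPsi.
case: hPsi => _ hpoly [Q [hPsiQ hQ]].
have [a a0 det_aPsi] : exists2 a : C, a != 0 &
    forall z, on_circle z -> \det (a *: Psi z) = 1.
  case: (posnP n) => [n0 | n_gt0].
    by exists 1 => [|z _]; [exact: oner_neq0 | move: (1 *: Psi z); rewrite n0; exact: det_mx00].
  exists (n.-root c^-1) => [|z hz]; last by rewrite detZ rootCK // hc // mulVf.
  have : (n.-root c^-1) ^+ n != 0 by rewrite rootCK // invr_eq0.
  by rewrite expf_eq0 n_gt0.
exists a => //; split => //; first exact: is_poly_loop_scale.
exists (fun z => a^-1 *: Q z); split; first exact: loop_inverse_scale.
exact: is_poly_loop_scale.
Qed.

Variable k : 'I_n -> int.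

Lemma tr_xi_of_eq0 : \tr (xi_of C k) = 0 -> \sum_j k j = 0.
Proof.
rewrite /xi_of mxtrace_diag.
under eq_bigr do rewrite mxE.
rewrite -mulr_sumr -(raddf_sum (intmul (1 : C))) => /eqP.
by rewrite mulf_eq0 (negbTE (@neq0Ci C)) intr_eq0 => /eqP.
Qed.

Lemma det_gamma_xi (z : C) : \tr (xi_of C k) = 0 -> z != 0 -> \det (gamma_xi k z) = 1.
Proof.
move=> /tr_xi_of_eq0 sum_k z0; rewrite /gamma_xi det_diag.
under eq_bigr do rewrite mxE.
have zU : z \is a GRing.unit by rewrite unitfE.
by rewrite -(big_morph (fun s : int => z ^ s) (exprzDr zU) (expr0z z)) sum_k.
Qed.

Lemma U_xi_mono (G G' GC GC' : loop C n -> Prop) g :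
  (forall h, G h -> G' h) -> (forall h, GC h -> GC' h) ->
  U_xi G GC k g -> U_xi G' GC' k g.
Proof.
move=> GG' GCGC' [[/GG' gG g1 gl gi] [Psi [[/GCGC' PsiGC Psip Psii] hs]]].
by split; [|exists Psi].
Qed.

Lemma U_xi_U_in_SU g : \tr (xi_of C k) = 0 ->
  U_xi (@in_U C n) (@in_GL C n) k g -> in_SU g.
Proof.
move=> hxi [[gU g1 _ _] [Psi [hPsi hs]]].
have [cPsi _ hcPsi] := Lambda_plus_det_const hPsi.
have [F hF] := subspace_incl_factor (fun v => proj1 (hs v)).
have [H hH] := subspace_incl_factor (fun v => proj2 (hs v)).
have FH1 z : on_circle z -> evalmx F z *m evalmx H z = 1%:M.
  move=> hz; apply: mulmx1C.
  have gHF : g z *m (evalmx H z *m evalmx F z) = g z by rewrite mulmxA -hH // -hF.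
  by rewrite -[LHS]mul1mx -(gU z hz) -mulmxA gHF gU.
have [cF _ hcF] := det_evalmx_const FH1.
have det_g z : on_circle z -> \det (g z) = cPsi * cF.
  move=> hz; rewrite hF // !det_mulmx hcPsi // hcF //.
  by rewrite det_gamma_xi ?on_circle_neq0 // mulr1.
split=> // z hz.
by rewrite det_g // -(det_g 1 (on_circle1 C)) g1 det1.
Qed.

End Loops.

Theorem mainTheorem7 (C : numClosedFieldType) (n : nat) (k : 'I_n -> int)
  (hxi : \tr (xi_of C k) = 0) :
  forall g : loop C n,
    U_xi (@in_SU C n) (@in_SL C n) k g <-> U_xi (@in_U C n) (@in_GL C n) k g.
Proof.
move=> g; split.
  apply: U_xi_mono => h; first by case.
  by move=> h1 z hz; rewrite unitmxE h1 // unitr1.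
move=> hg; have gSU := U_xi_U_in_SU hxi hg.
case: hg => [[_ g1 gl gi] [Psi [hPsi hs]]].
have [a a0 haPsi] := Lambda_plus_GL_scale_SL hPsi.
split; first by split.
exists (fun z => a *: Psi z); split => // v.
have scaled := same_subspace_scale Psi (gamma_xi k) a0 v.
exact: (iff_trans (hs v) (iff_sym scaled)).
Qed.
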